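(* Let $P\subseteq\mathbb{C}$ be a finitely generated field extension of $\mathbb{Q}$ and $a_1,\dots,a_{r+1}\in\mathbb{C}^\times$. If $\{a_1,\dots,a_r,a_{r+1}\}$ is simple in $P_{r+1}=P(a_1,\dots,a_{r+1})$, then $\{a_1,\dots,a_r\}$ is simple in $P_r=P(a_1,\dots,a_r)$.
   Context: For a field $K$, a tuple $\{c_1,\dots,c_k\}\subseteq K^{\times}$ is simple in $K$ if it is multiplicatively independent ($c_1^{n_1}\cdots c_k^{n_k}=1$ with $n_i\in\mathbb{Z}$ only if all $n_i=0$) and the multiplicative subgroup $\langle c_1,\dots,c_k\rangle$ it generates is pure in $K^{\times}$ (whenever $x^n=c$, $c\in\langle c_1,\dots,c_k\rangle$, $n\ge1$, has a solution in $K^\times$, it has one in $\langle c_1,\dots,c_k\rangle$). *)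

From mathcomp Require Import all_boot all_order all_algebra.
From mathcomp Require Import complex reals.
Set Implicit Arguments. Unset Strict Implicit. Unset Printing Implicit Defensive.
Import Order.TTheory GRing.Theory Num.Theory.
Local Open Scope ring_scope.

Section Defs.
Variable F : fieldType.

Definition is_subfield (K : F -> Prop) : Prop :=
  [/\ K 0, K 1, (forall x y, K x -> K y -> K (x - y)),
      (forall x y, K x -> K y -> K (x * y)) & (forall x, K x -> K x^-1)].

Definition genfield (S : F -> Prop) : F -> Prop :=
  fun z => forall K, is_subfield K -> (forall x, S x -> K x) -> K z.

Definition adjoin (K : F -> Prop) (k : nat) (a : 'I_k -> F) : F -> Prop :=
  genfield (fun x => K x \/ exists i, a i = x).

(* P is a finitely generated field extension of Q inside F (the prime field
   of a subfield of a characteristic-0 field is Q) *)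
Definition fg_field (P : F -> Prop) : Prop :=
  is_subfield P /\
  exists (n : nat) (g : 'I_n -> F),
    forall z, P z <-> genfield (fun x => exists i, g i = x) z.

Definition mult_indep (k : nat) (c : 'I_k -> F) : Prop :=
  forall n : 'I_k -> int, \prod_(i < k) c i ^ n i = 1 -> forall i, n i = 0.

Definition in_mgroup (k : nat) (c : 'I_k -> F) (x : F) : Prop :=
  exists n : 'I_k -> int, x = \prod_(i < k) c i ^ n i.

Definition pure_in (K : F -> Prop) (k : nat) (c : 'I_k -> F) : Prop :=
  forall (x : F) (m : nat), in_mgroup c x -> (0 < m)%N ->
    (exists y, [/\ K y, y != 0 & y ^+ m = x]) ->
    exists z, in_mgroup c z /\ z ^+ m = x.

Definition simple_in (K : F -> Prop) (k : nat) (c : 'I_k -> F) : Prop :=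
  [/\ forall i, K (c i) /\ c i != 0, mult_indep c & pure_in K c].
End Defs.

From mathcomp Require Import all_boot all_order all_algebra.
From mathcomp Require Import complex reals.
Import Order.TTheory GRing.Theory Num.Theory.
Local Open Scope ring_scope.
Local Open Scope complex_scope.

Set Implicit Arguments.
Unset Strict Implicit.
Unset Printing Implicit Defensive.

(* By independence, an element of <a_1, ..., a_(r+1)> has unique exponents.
   If x in <a_1, ..., a_r> has an m-th root in P_r, that root lies in P_(r+1),
   so purity gives z = a_1^k_1 ... a_(r+1)^k_(r+1) with z^m = x; comparing
   exponents, m k_(r+1) = 0, hence z in <a_1, ..., a_r>.  The same argument
   works for any subfamily and any intermediate subfield containing it. *)

Section MultIndep.
Variable F : fieldType.

Lemma mult_indep_exps_eq (k : nat) (c : 'I_k -> F) (u v : 'I_k -> int) :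
    (forall i, c i != 0) -> mult_indep c ->
  \prod_(i < k) c i ^ u i = \prod_(i < k) c i ^ v i -> u =1 v.
Proof.
move=> c_neq0 c_indep uv i; apply/eqP; rewrite -subr_eq0; apply/eqP.
apply: (c_indep (fun i => u i - v i)).
have prod_v_neq0 : \prod_(i < k) c i ^ v i != 0.
  by apply/prodf_neq0 => j _; rewrite expfz_neq0.
apply: (mulIf prod_v_neq0); rewrite mul1r -{2}uv -big_split /=.
by apply: eq_bigr => j _; rewrite -exprzDr ?subrK // unitfE.
Qed.

End MultIndep.

Section Subfamily.
Variables (F : fieldType) (k l : nat) (f : 'I_k -> 'I_l).
Hypothesis f_inj : injective f.

Definition ext0 (n : 'I_k -> int) (j : 'I_l) : int :=
  if [pick i | f i == j] is Some i then n i else 0.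

Lemma ext0_f (n : 'I_k -> int) (i : 'I_k) : ext0 n (f i) = n i.
Proof.
rewrite /ext0; case: pickP => [i' /eqP/f_inj -> // |].
by move=> /(_ i); rewrite eqxx.
Qed.

Lemma ext0_out (n : 'I_k -> int) (j : 'I_l) : j \notin f @: setT -> ext0 n j = 0.
Proof.
rewrite /ext0; case: pickP => [i /eqP <- | //].
by rewrite imset_f ?in_setT.
Qed.

Lemma ext0_comp (u : 'I_l -> int) :
  (forall j, j \notin f @: setT -> u j = 0) -> ext0 (u \o f) =1 u.
Proof.
move=> u_out j; have [/imsetP[i _ ->] | j_out] := boolP (j \in f @: setT).
  exact: ext0_f.
by rewrite ext0_out // u_out.
Qed.

Lemma prod_ext0 (c : 'I_l -> F) (n : 'I_k -> int) :
  \prod_(j < l) c j ^ ext0 n j = \prod_(i < k) c (f i) ^ n i.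
Proof.
rewrite (bigID (mem (f @: setT))) /= [X in _ * X]big1 ?mulr1; last first.
  by move=> j j_out; rewrite ext0_out // expr0z.
rewrite big_imset /=; last by move=> i i' _ _; apply: f_inj.
by apply: eq_big => [i | i _]; rewrite ?in_setT ?ext0_f.
Qed.

Lemma mult_indep_comp (c : 'I_l -> F) : mult_indep c -> mult_indep (c \o f).
Proof.
move=> c_indep n prod_n i; rewrite -(ext0_f n i).
by apply: c_indep; rewrite prod_ext0.
Qed.

Lemma pure_in_comp (K K' : F -> Prop) (c : 'I_l -> F) :
    (forall x, K' x -> K x) -> (forall j, c j != 0) -> mult_indep c ->
  pure_in K c -> pure_in K' (c \o f).
Proof.
move=> K'K c_neq0 c_indep c_pure x m [n ->] m_gt0 [y [K'y y_neq0 y_root]].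
have c_x : in_mgroup c (\prod_(i < k) c (f i) ^ n i).
  by exists (ext0 n); rewrite prod_ext0.
have K_root : exists y, [/\ K y, y != 0 & y ^+ m = \prod_(i < k) c (f i) ^ n i].
  by exists y; split=> //; apply: K'K.
have [z [[u ->] z_root]] := c_pure _ _ c_x m_gt0 K_root.
have u_exps : forall j, u j * m%:Z = ext0 n j.
  apply: mult_indep_exps_eq c_neq0 c_indep _.
  rewrite prod_ext0 -z_root -prodrXl.
  by apply: eq_bigr => j _; rewrite -exprz_exp.
have u_out : forall j, j \notin f @: setT -> u j = 0.
  move=> j /(ext0_out n); rewrite -u_exps => /eqP.
  by rewrite mulf_eq0 => /orP[/eqP // | /eqP[m_eq0]]; rewrite m_eq0 in m_gt0.
exists (\prod_(j < l) c j ^ u j); split=> //.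
by exists (u \o f); rewrite -prod_ext0; apply: eq_bigr => j _; rewrite ext0_comp.
Qed.

Lemma simple_in_comp (K K' : F -> Prop) (c : 'I_l -> F) :
    (forall x, K' x -> K x) -> (forall i, K' (c (f i))) ->
  simple_in K c -> simple_in K' (c \o f).
Proof.
move=> K'K K'c [c_in c_indep c_pure]; split.
- by move=> i; split; [exact: K'c | case: (c_in (f i))].
- exact: mult_indep_comp.
- by apply: pure_in_comp c_pure => // j; case: (c_in j).
Qed.

End Subfamily.

Section Adjoin.
Variables (F : fieldType) (K : F -> Prop).

Lemma mem_adjoin (k : nat) (a : 'I_k -> F) (i : 'I_k) : adjoin K a (a i).
Proof. by move=> L _; apply; right; exists i. Qed.

Lemma adjoin_comp_sub (k l : nat) (a : 'I_l -> F) (f : 'I_k -> 'I_l) (z : F) :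
  adjoin K (a \o f) z -> adjoin K a z.
Proof.
move=> z_in L L_subfield L_gen; apply: z_in => // x [Kx | [i <-]]; apply: L_gen.
  by left.
by right; exists (f i).
Qed.

End Adjoin.

Lemma widen_ord_inj (m n : nat) (le_mn : (m <= n)%N) : injective (widen_ord le_mn).
Proof. by move=> i j [] /ord_inj. Qed.

Unset Implicit Arguments.

Theorem lemma2p5 (R : realType) (P : R[i] -> Prop) (r : nat)
    (a : 'I_r.+1 -> R[i]) :
  fg_field P ->
  (forall i, a i != 0) ->
  simple_in (adjoin P a) a ->
  simple_in (adjoin P (fun i : 'I_r => a (widen_ord (leqnSn r) i)))
            (fun i : 'I_r => a (widen_ord (leqnSn r) i)).
Proof.
move=> _ _ simple_a.
pose f := widen_ord (leqnSn r).
apply: (simple_in_comp (@widen_ord_inj _ _ (leqnSn r)) (K' := adjoin P (a \o f))) simple_a.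
- exact: adjoin_comp_sub.
- exact: mem_adjoin.
Qed.
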